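(* Let $X$ be a convex subset of a real vector space, $(Y,\langle\cdot,\cdot\rangle)$ a real inner product space, $I:X\to\mathbb{R}$ a bounded above convex function and $\Phi:X\to Y$ an affine operator such that $$\inf_{z\in\Phi(X)}\langle z,y\rangle=-\infty$$ for all $y\in\Phi(X)\setminus\{0\}$. Then the set of all global minima of the function $x\mapsto I(x)+\|\Phi(x)\|^2$ on $X$ is contained in $\Phi^{-1}(0)$.
   Context: If $E,F$ are real vector spaces and $D$ is a convex subset of $E$, an operator $\Phi:D\to F$ is called affine if $\Phi(\lambda x+(1-\lambda)y)=\lambda\Phi(x)+(1-\lambda)\Phi(y)$ for all $x,y\in D$ and $\lambda\in[0,1]$. *)

From mathcomp Require Import all_boot all_order all_algebra.
From mathcomp Require Import all_classical all_reals.
From mathcomp Require Import ereal.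
Set Implicit Arguments. Unset Strict Implicit. Unset Printing Implicit Defensive.
Import Order.TTheory GRing.Theory Num.Theory.
Local Open Scope classical_set_scope.
Local Open Scope ring_scope.

Section Defs.
Variables (R : realType).

Definition convex_set (E : lmodType R) (D : set E) : Prop :=
  forall x y (l : R), D x -> D y -> 0 <= l <= 1 -> D (l *: x + (1 - l) *: y).

Definition convex_fun_on (E : lmodType R) (D : set E) (f : E -> R) : Prop :=
  forall x y (l : R), D x -> D y -> 0 <= l <= 1 ->
    f (l *: x + (1 - l) *: y) <= l * f x + (1 - l) * f y.

Definition bounded_above_on (E : Type) (D : set E) (f : E -> R) : Prop :=
  exists M : R, forall x, D x -> f x <= M.

Definition affine_on (E F : lmodType R) (D : set E) (Phi : E -> F) : Prop :=
  forall x y (l : R), D x -> D y -> 0 <= l <= 1 ->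
    Phi (l *: x + (1 - l) *: y) = l *: Phi x + (1 - l) *: Phi y.

Definition inner_product (Y : lmodType R) (ip : Y -> Y -> R) : Prop :=
  [/\ (forall u v, ip u v = ip v u),
      (forall a u v w, ip (a *: u + v) w = a * ip u w + ip v w),
      (forall u, 0 <= ip u u) &
      (forall u, ip u u = 0 -> u = 0)].

Definition sqnorm (Y : lmodType R) (ip : Y -> Y -> R) (y : Y) : R := ip y y.

Definition global_min_on (E : Type) (D : set E) (f : E -> R) (x : E) : Prop :=
  D x /\ forall x', D x' -> f x <= f x'.
End Defs.

(* If x0 minimises I + |Phi|^2 over X, moving from x0 towards any x in X along a
   segment does not decrease the objective; differentiating at x0 gives the
   variational inequality I x - I x0 + 2 <Phi x, Phi x0> - 2 |Phi x0|^2 >= 0.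
   As I is bounded above by M, this bounds <z, Phi x0> below by
   (I x0 - M)/2 + |Phi x0|^2 for every z in Phi(X), which contradicts the
   hypothesis on Phi(X) unless Phi x0 = 0. *)
From mathcomp Require Import all_boot all_order all_algebra.
From mathcomp Require Import all_classical all_reals.
From mathcomp Require Import ereal.
From mathcomp Require Import ring lra.
Import Order.TTheory GRing.Theory Num.Theory.
Local Open Scope classical_set_scope.
Local Open Scope ring_scope.

Lemma ge0_linear_near0 (R : realFieldType) (A D : R) :
  (forall t : R, 0 < t <= 1 -> 0 <= A + t * D) -> 0 <= A.
Proof.
move=> H; rewrite leNgt; apply/negP => A_lt0.
have [D_le0 | D_gt0] := lerP D 0.
  by have := H 1 (introT andP (conj ltr01 (lexx 1))); lra.
(* at t = -A / (D - A) the right-hand side equals -A^2 / (D - A) < 0 *)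
have DA_gt0 : 0 < D - A by lra.
have t_gt0 : 0 < - A / (D - A) by apply: divr_gt0; lra.
have t_le1 : - A / (D - A) <= 1 by rewrite ler_pdivrMr //; lra.
have := H _ (introT andP (conj t_gt0 t_le1)).
have -> : A + - A / (D - A) * D = - (A * A) / (D - A).
  by field; rewrite gt_eqF.
rewrite pmulr_lge0 ?invr_gt0 //; nra.
Qed.

Section InnerProduct.
Variables (R : realType) (Y : lmodType R) (ip : Y -> Y -> R).
Hypothesis ip_inner : inner_product ip.

Lemma ipC u v : ip u v = ip v u.
Proof. by case: ip_inner. Qed.

Lemma ip0l w : ip 0 w = 0.
Proof.
case: ip_inner => _ ipDZl _ _.
by have := ipDZl 1 0 0 w; rewrite scale1r addr0 => h; lra.
Qed.

Lemma ipZl a u w : ip (a *: u) w = a * ip u w.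
Proof.
case: ip_inner => _ ipDZl _ _.
by have := ipDZl a u 0 w; rewrite addr0 ip0l addr0.
Qed.

Lemma ip_combl a b u v w :
  ip (a *: u + b *: v) w = a * ip u w + b * ip v w.
Proof. by case: ip_inner => _ ipDZl _ _; rewrite ipDZl ipZl. Qed.

Lemma sqnorm_comb a b u v :
  sqnorm ip (a *: u + b *: v) =
  a ^+ 2 * ip u u + 2 * a * b * ip u v + b ^+ 2 * ip v v.
Proof.
by rewrite /sqnorm ip_combl (ipC u) (ipC v) !ip_combl (ipC v u); ring.
Qed.

End InnerProduct.

Section VariationalInequality.
Variables (R : realType) (E Y : lmodType R) (ip : Y -> Y -> R).
Variables (X : set E) (I : E -> R) (Phi : E -> Y) (x0 : E).
Hypotheses (ip_inner : inner_product ip) (X_convex : convex_set X).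
Hypotheses (I_convex : convex_fun_on X I) (Phi_affine : affine_on X Phi).
Hypothesis x0_min : global_min_on X (fun x => I x + sqnorm ip (Phi x)) x0.

Lemma global_min_variational x : X x ->
  0 <= I x - I x0 + 2 * ip (Phi x) (Phi x0) - 2 * sqnorm ip (Phi x0).
Proof.
move=> Xx; case: x0_min => X0 min_x0.
set a := Phi x; set b := Phi x0.
apply: (@ge0_linear_near0 _ _ (ip a a - 2 * ip a b + ip b b)) => t /andP[t_gt0 t_le1].
have t01 : 0 <= t <= 1 by apply/andP; split; lra.
have := min_x0 _ (X_convex _ _ _ Xx X0 t01).
rewrite Phi_affine // sqnorm_comb // -/a -/b /sqnorm => f_le.
have I_le := I_convex _ _ _ Xx X0 t01.
have step : 0 <= t * (I x - I x0 + 2 * ip a b - 2 * ip b b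
                     + t * (ip a a - 2 * ip a b + ip b b)).
  have -> : t * (I x - I x0 + 2 * ip a b - 2 * ip b b
                 + t * (ip a a - 2 * ip a b + ip b b)) =
            t * I x + (1 - t) * I x0
            + (t ^+ 2 * ip a a + 2 * t * (1 - t) * ip a b + (1 - t) ^+ 2 * ip b b)
            - (I x0 + ip b b) by ring.
  by rewrite subr_ge0 (le_trans f_le) // lerD2r.
by rewrite pmulr_rge0 in step.
Qed.

End VariationalInequality.

Arguments global_min_variational {R E Y ip X I Phi x0} _ _ _ _ _ {x}.

Theorem theorem1p4 (R : realType) (E Y : lmodType R) (ip : Y -> Y -> R)
  (X : set E) (I : E -> R) (Phi : E -> Y) :
  inner_product ip ->
  convex_set X ->
  convex_fun_on X I ->
  bounded_above_on X I ->
  affine_on X Phi ->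
  (forall y, (Phi @` X) y -> y <> 0 ->
     ereal_inf [set (ip z y)%:E | z in Phi @` X] = -oo%E) ->
  [set x | global_min_on X (fun x => I x + sqnorm ip (Phi x)) x]
    `<=` Phi @^-1` [set 0].
Proof.
move=> ip_inner X_convex I_convex [M I_le_M] Phi_affine inf_Ny x0 x0_min /=.
have X0 := x0_min.1.
apply: contrapT => y0_neq0.
set lb := (I x0 - M) / 2 + sqnorm ip (Phi x0).
have lb_le z : (Phi @` X) z -> lb <= ip z (Phi x0).
  move=> [x Xx <-].
  have := global_min_variational ip_inner X_convex I_convex Phi_affine x0_min Xx.
  by have := I_le_M _ Xx; rewrite /lb; lra.
have [_ [z Zz <-]] := lb_ereal_infNy_adherent (lb - 1)
  (inf_Ny _ (ex_intro2 _ _ x0 X0 erefl) y0_neq0).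
by rewrite lte_fin; have := lb_le _ Zz; lra.
Qed.
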